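(* Let $R$ be a GCD-domain. Let $0\leqslant n\leqslant m$, $s_0,s_1,\dots,s_n\in\operatorname{Sqf} R$ and $t_0,t_1,\dots,t_m\in\operatorname{Sqf} R$. If $$s_n^{2^n}s_{n-1}^{2^{n-1}}\cdots s_1^2s_0=t_m^{2^m}t_{m-1}^{2^{m-1}}\cdots t_1^2t_0,$$ then $s_i\sim t_i$ for $i=0,\dots,n$, and, if $m>n$, then $t_i\in R^{\ast}$ for $i=n+1,\dots,m$.
   Context: A GCD-domain is a commutative ring with identity without zero divisors in which the intersection of any two principal ideals is principal. $R^{\ast}$ denotes the set of invertible elements of $R$; $a\sim b$ means $a$ and $b$ are associated. An element $a\in R$ is square-free if it cannot be written as $a=b^2c$ with $b\in R\setminus R^{\ast}$ and $c\in R$; $\operatorname{Sqf} R$ denotes the set of square-free elements of $R$. *)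

From HB Require Import structures.
From mathcomp Require Import all_boot all_order all_algebra.
Set Implicit Arguments. Unset Strict Implicit. Unset Printing Implicit Defensive.
Import GRing.Theory.
Local Open Scope ring_scope.

Definition rdvd (R : comRingType) (a x : R) : Prop := exists k : R, x = k * a.

Definition associated (R : comRingType) (a b : R) : Prop := rdvd a b /\ rdvd b a.

Definition GCD_domain (R : idomainType) : Prop :=
  forall a b : R, exists c : R,
    forall x : R, (rdvd a x /\ rdvd b x) <-> rdvd c x.

Definition square_free (R : comUnitRingType) (a : R) : Prop :=
  ~ (exists b c : R, b \isn't a GRing.unit /\ a = b ^+ 2 * c).

From HB Require Import structures.
From mathcomp Require Import all_boot all_order all_algebra.
From mathcomp Require Import ring.
Import GRing.Theory.
Local Open Scope ring_scope.

(* Write both sides as [s 0 * X ^+ 2] and [t 0 * Y ^+ 2], with X and Y the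
   products of the higher terms.  Cancelling a gcd of X and Y leaves coprime
   cofactors X', Y' with [s 0 * X' ^+ 2 ~ t 0 * Y' ^+ 2]; by Gauss's lemma
   X' ^+ 2 divides the square-free [t 0], so X' is a unit, and symmetrically
   so is Y'.  Hence [s 0 ~ t 0] and [X ~ Y], and induction on n finishes. *)

Set Implicit Arguments. Unset Strict Implicit.

Section SquareFree.
Variable R : idomainType.

Definition rcoprime (x y : R) : Prop :=
  forall e : R, rdvd e x -> rdvd e y -> e \is a GRing.unit.

Lemma square_free_neq0 (a : R) : square_free a -> a != 0.
Proof.
move=> sqf_a; apply/eqP => a0; apply: sqf_a; exists 0, 0.
by rewrite unitr0 a0 mulr0.
Qed.

Lemma square_free_unitMl (u a : R) :
  u \is a GRing.unit -> square_free a -> square_free (u * a).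
Proof.
move=> uu sqf_a [b [c [nub Ea]]]; apply: sqf_a; exists b, (u^-1 * c).
by split=> //; rewrite -[a](mulKr uu) Ea; ring.
Qed.

Lemma associated_unitMl (u a b : R) :
  u \is a GRing.unit -> associated (u * a) b -> associated a b.
Proof.
move=> uu [[k Eb] [k' Eua]]; split; first by exists (k * u); rewrite Eb mulrA.
by exists (u^-1 * k'); rewrite -[a](mulKr uu) Eua mulrA.
Qed.

Lemma prod_pow2S (n : nat) (s : nat -> R) :
  \prod_(i < n.+1) s i ^+ (2 ^ i)
  = s 0%N * (\prod_(i < n) s i.+1 ^+ (2 ^ i)) ^+ 2.
Proof.
rewrite big_ord_recl expn0 expr1 -prodrXl; congr (_ * _).
by apply: eq_bigr => i _; rewrite lift0 expnS mulnC exprM.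
Qed.

Lemma prod_pow2_neq0 (n : nat) (s : nat -> R) :
  (forall i, (i < n)%N -> s i != 0) -> \prod_(i < n) s i ^+ (2 ^ i) != 0.
Proof. by move=> s_neq0; apply/prodf_neq0 => i _; rewrite expf_neq0 ?s_neq0. Qed.

Lemma prod_pow2_unit (n : nat) (s : nat -> R) :
  \prod_(i < n) s i ^+ (2 ^ i) \is a GRing.unit ->
  forall j, (j < n)%N -> s j \is a GRing.unit.
Proof.
move=> uP j jn; move: uP; rewrite (bigD1 (Ordinal jn)) //= unitrM => /andP[+ _].
by rewrite unitrX_pos // expn_gt0.
Qed.

Section GCDDomain.
Hypothesis hR : GCD_domain R.

(* [g] is the cofactor of the lcm in [x * y], hence a gcd of [x] and [y]. *)
Lemma lcm_gcd_factor (x y : R) : x != 0 -> y != 0 ->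
  exists g x' y', [/\ x = g * x', y = g * y' &
    forall z, rdvd x z /\ rdvd y z <-> rdvd (g * x' * y') z].
Proof.
move=> x0 y0; have [l lcm_l] := hR x y.
have [[k1 El] [k2 El']] : rdvd x l /\ rdvd y l.
  by apply/lcm_l; exists 1; rewrite mul1r.
have [g Exy] : rdvd l (x * y).
  by apply/lcm_l; split; [exists y; rewrite mulrC | exists x].
have Ex : x = g * k2 by apply: (mulIf y0); rewrite Exy El'; ring.
have Ey : y = g * k1 by apply: (mulIf x0); rewrite mulrC Exy El; ring.
exists g, k2, k1; split=> // z.
by have -> : g * k2 * k1 = l by rewrite El -Ex; ring.
Qed.

Lemma Gauss_rdvdl (x y z : R) : x != 0 -> y != 0 -> rcoprime x y ->
  rdvd x (y * z) -> rdvd x z.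
Proof.
move=> x0 y0 cop_xy [h Eyz].
have [g [x' [y' [Ex Ey lcm_gxy]]]] := lcm_gcd_factor x0 y0.
have ug : g \is a GRing.unit.
  by apply: cop_xy; [exists x'; rewrite Ex mulrC | exists y'; rewrite Ey mulrC].
have gy'0 : g * y' != 0 by rewrite -Ey.
have [w Ew] : rdvd (g * x' * y') (y * z).
  by apply/lcm_gxy; split; [exists h | exists z; rewrite mulrC].
exists (w * g^-1); apply: (mulIf gy'0).
have Ex' : x' = g^-1 * x by rewrite Ex mulKr.
transitivity (y * z); first by rewrite Ey; ring.
by rewrite Ew Ex'; ring.
Qed.

Lemma Gauss_rdvdl_sqr (x y z : R) : x != 0 -> y != 0 -> rcoprime x y ->
  rdvd x (y ^+ 2 * z) -> rdvd x z.
Proof.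
move=> x0 y0 cop_xy dvd_x.
by do 2!apply: (Gauss_rdvdl x0 y0 cop_xy); rewrite mulrA -expr2.
Qed.

Lemma gcd_coprime_cofactors (x y : R) : x != 0 -> y != 0 ->
  exists d x' y', [/\ x = d * x', y = d * y' & rcoprime x' y'].
Proof.
move=> x0 y0; have [g [x' [y' [Ex Ey lcm_gxy]]]] := lcm_gcd_factor x0 y0.
exists g, x', y'; split=> // e [a Ex'] [b Ey'].
have b0 : b != 0 by apply: contraNneq y0 => b0; rewrite Ey Ey' b0 mul0r mulr0.
have gx'b0 : g * x' * b != 0 by rewrite mulf_neq0 // -Ex.
(* [g * x' * b = x * b = y * a] is a common multiple of [x] and [y]. *)
have [w Ew] : rdvd (g * x' * y') (g * x' * b).
  by apply/lcm_gxy; split; [exists b; rewrite Ex mulrC | exists a;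
     rewrite Ey Ex' Ey'; ring].
have we1 : (w * e) * (g * x' * b) = 1 * (g * x' * b).
  by rewrite mul1r {2}Ew Ey'; ring.
have we_eq1 := mulIf gx'b0 we1.
by apply/unitrP; exists w; split; rewrite // mulrC.
Qed.

Lemma square_free_coprime_sqr_unit (a b x y : R) : square_free b ->
  x != 0 -> y != 0 -> rcoprime x y -> a * x ^+ 2 = b * y ^+ 2 ->
  x \is a GRing.unit.
Proof.
move=> sqf_b x0 y0 cop_xy E.
have [b1 Eb] : rdvd x b.
  by apply: (Gauss_rdvdl_sqr x0 y0 cop_xy); exists (a * x); rewrite mulrC -E; ring.
have E1 : a * x = b1 * y ^+ 2.
  by apply: (mulIf x0); rewrite -mulrA -expr2 E Eb; ring.
have [b2 Eb1] : rdvd x b1.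
  by apply: (Gauss_rdvdl_sqr x0 y0 cop_xy); exists a; rewrite mulrC -E1.
apply/negPn/negP => nux; apply: sqf_b; exists x, b2.
by split=> //; rewrite Eb Eb1; ring.
Qed.

Lemma square_free_mul_sqr_eq (a b x y : R) :
  square_free a -> square_free b -> x != 0 -> y != 0 ->
  a * x ^+ 2 = b * y ^+ 2 ->
  associated a b /\ exists2 v, v \is a GRing.unit & y = v * x.
Proof.
move=> sqf_a sqf_b x0 y0 E.
have [d [x' [y' [Ex Ey cop_xy]]]] := gcd_coprime_cofactors x0 y0.
have x'0 : x' != 0 by apply: contraNneq x0 => x'0; rewrite Ex x'0 mulr0.
have y'0 : y' != 0 by apply: contraNneq y0 => y'0; rewrite Ey y'0 mulr0.
have d20 : d ^+ 2 != 0.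
  by rewrite expf_neq0 //; apply: contraNneq x0 => d0; rewrite Ex d0 mul0r.
have E' : a * x' ^+ 2 = b * y' ^+ 2.
  apply: (mulIf d20); transitivity (a * x ^+ 2); first by rewrite Ex; ring.
  by rewrite E Ey; ring.
have ux' := square_free_coprime_sqr_unit sqf_b x'0 y'0 cop_xy E'.
have cop_yx : rcoprime y' x' by move=> e ey ex; apply: cop_xy.
have uy' := square_free_coprime_sqr_unit sqf_a y'0 x'0 cop_yx (esym E').
have ux'2 : x' ^+ 2 \is a GRing.unit by rewrite unitrX.
have uy'2 : y' ^+ 2 \is a GRing.unit by rewrite unitrX.
split; first split.
- by exists (x' ^+ 2 / y' ^+ 2); rewrite -[b](mulrK uy'2) -E'; ring.
- by exists (y' ^+ 2 / x' ^+ 2); rewrite -[a](mulrK ux'2) E'; ring.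
exists (x'^-1 * y'); first by rewrite unitrM unitrV ux' uy'.
rewrite Ex Ey; transitivity (d * y' * (x'^-1 * x')); last by ring.
by rewrite mulVr // mulr1.
Qed.

Lemma prod_pow2_square_free_head (n m : nat) (u : R) (s t : nat -> R) :
  u \is a GRing.unit ->
  (forall i, (i <= n)%N -> square_free (s i)) ->
  (forall i, (i <= m)%N -> square_free (t i)) ->
  u * \prod_(i < n.+1) s i ^+ (2 ^ i) = \prod_(i < m.+1) t i ^+ (2 ^ i) ->
  associated (s 0%N) (t 0%N) /\ exists2 v, v \is a GRing.unit &
    v * \prod_(i < n) s i.+1 ^+ (2 ^ i) = \prod_(i < m) t i.+1 ^+ (2 ^ i).
Proof.
move=> uu sqf_s sqf_t; rewrite !prod_pow2S mulrA => E.
have [assoc_st [v uv Ev]] := square_free_mul_sqr_eq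
  (square_free_unitMl uu (sqf_s 0%N isT)) (sqf_t 0%N isT)
  (prod_pow2_neq0 (fun i (lt_in : (i < n)%N) => square_free_neq0 (sqf_s i.+1 lt_in)))
  (prod_pow2_neq0 (fun i (lt_im : (i < m)%N) => square_free_neq0 (sqf_t i.+1 lt_im)))
  E.
by split; [apply: associated_unitMl uu assoc_st | exists v].
Qed.

Lemma prod_pow2_square_free_uniq (n : nat) : forall (m : nat) (u : R) (s t : nat -> R),
  (n <= m)%N -> u \is a GRing.unit ->
  (forall i, (i <= n)%N -> square_free (s i)) ->
  (forall i, (i <= m)%N -> square_free (t i)) ->
  u * \prod_(i < n.+1) s i ^+ (2 ^ i) = \prod_(i < m.+1) t i ^+ (2 ^ i) ->
  (forall i, (i <= n)%N -> associated (s i) (t i)) /\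
  (forall i, (n < i <= m)%N -> t i \is a GRing.unit).
Proof.
elim: n => [|n IHn] m u s t le_nm uu sqf_s sqf_t E;
  have [assoc0 [v uv Ev]] := prod_pow2_square_free_head uu sqf_s sqf_t E.
  split=> [[|//] _|[|j] // /andP[_ lt_jm]]; first exact: assoc0.
  apply: (prod_pow2_unit (s := fun i => t i.+1) _ lt_jm).
  by rewrite -Ev big_ord0 mulr1.
case: m le_nm sqf_t E Ev => [//|m] le_nm sqf_t _ Ev.
have [assocS unitS] := IHn m v (fun i => s i.+1) (fun i => t i.+1) le_nm uv
  (fun i => sqf_s i.+1) (fun i => sqf_t i.+1) Ev.
by split=> [[_|i /assocS //]|[|j] // /unitS].
Qed.

End GCDDomain.
End SquareFree.

Theorem proposition2 (R : idomainType) (hR : GCD_domain R) (n m : nat)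
  (hnm : (n <= m)%N) (s t : nat -> R)
  (hs : forall i : nat, (i <= n)%N -> square_free (s i))
  (ht : forall i : nat, (i <= m)%N -> square_free (t i))
  (heq : \prod_(i < n.+1) s i ^+ (2 ^ i) = \prod_(i < m.+1) t i ^+ (2 ^ i)) :
  (forall i : nat, (i <= n)%N -> associated (s i) (t i)) /\
  ((n < m)%N -> forall i : nat, (n < i <= m)%N -> t i \is a GRing.unit).
Proof.
have [assoc_st unit_t] :=
  prod_pow2_square_free_uniq hR hnm (unitr1 R) hs ht (etrans (mul1r _) heq).
by split=> // _.
Qed.
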